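(* Let $l=m_5(e_3+e_4+e_5)+m_6e_6+m_7e_7+m_8e_8$ with $m_5,\dots,m_8\in\mathbb Z$ and $m_5+m_6+m_7+m_8$ even (these are exactly the vectors of $E_8$ orthogonal to $L_2=\langle e_2+e_1,e_2-e_1,e_4-e_3,e_5-e_4\rangle_\mathbb Z\cong 2A_1\oplus A_2$). Then $l$ is orthogonal to exactly $10$ roots of $E_8$ if and only if (i) $m_j\ne0$ for every $j\in\{5,6,7,8\}$ and $m_i\ne\pm m_j$ for all $5\le i<j\le8$, and (ii) $km_5\ne\pm m_6\pm m_7\pm m_8$ for $k\in\{1,3\}$ and every choice of signs. Moreover, $l$ is orthogonal to exactly $14$ roots of $E_8$ if (i) holds, (ii) holds for $k=1$, and there is exactly one relation of the form $3m_5=\pm m_6\pm m_7\pm m_8$ (exactly one choice of signs).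
   Context: $e_1,\dots,e_8$ is an orthonormal basis of $\mathbb R^8$ and $E_8=\{x\in\mathbb Z^8\cup(\mathbb Z+\tfrac12)^8\mid \sum_i x_i\in2\mathbb Z\}$; its roots (vectors of square $2$) are the $112$ vectors $\pm e_i\pm e_j$ ($i<j$) and the $128$ vectors $\frac12\sum_{i=1}^8(-1)^{\nu_i}e_i$ with $\sum\nu_i$ even. *)

From mathcomp Require Import all_boot all_order all_algebra.
Set Implicit Arguments. Unset Strict Implicit. Unset Printing Implicit Defensive.
Import Order.TTheory GRing.Theory Num.Theory.
Local Open Scope ring_scope.

(* Vectors of R^8 with rational coordinates, in the basis e_1,...,e_8
   (index i : 'I_8 corresponds to e_(i+1)). *)
Definition vec8 := 'I_8 -> rat.

Definition dot8 (x y : vec8) : rat := \sum_(i < 8) x i * y i.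

Definition in_E8 (x : vec8) : bool :=
  ([forall i, x i \is a Num.int] || [forall i, (x i - 2^-1) \is a Num.int])
  && ((\sum_(i < 8) x i) / 2 \is a Num.int).

Definition is_E8_root (x : vec8) : bool := in_E8 x && (dot8 x x == 2).

(* Every root has coordinates in {-1,-1/2,0,1/2,1} (since |x_i|^2 <= 2 and
   x_i in (1/2)Z), so all roots are of the form decode y below for
   y : {ffun 'I_8 -> 'I_5}, and decode is injective. *)
Definition decode (y : {ffun 'I_8 -> 'I_5}) : vec8 :=
  fun i => (((y i : nat)%:Z - 2)%:~R) / 2.

Definition num_orth_roots (l : vec8) : nat :=
  #|[set y : {ffun 'I_8 -> 'I_5} | is_E8_root (decode y) && (dot8 (decode y) l == 0)]|.

Definition lvec (m5 m6 m7 m8 : int) : vec8 :=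
  fun i => match val i with
           | 2 | 3 | 4 => m5%:~R
           | 5 => m6%:~R
           | 6 => m7%:~R
           | 7 => m8%:~R
           | _ => 0
           end.

Definition sgnb (b : bool) : int := (-1) ^+ b.

Definition cond_i (m5 m6 m7 m8 : int) : Prop :=
  [&& m5 != 0, m6 != 0, m7 != 0, m8 != 0,
      (m5 != m6) && (m5 != - m6), (m5 != m7) && (m5 != - m7),
      (m5 != m8) && (m5 != - m8), (m6 != m7) && (m6 != - m7),
      (m6 != m8) && (m6 != - m8) & (m7 != m8) && (m7 != - m8)].

Definition sign_rel (k : int) (m5 m6 m7 m8 : int) (s : bool * bool * bool) : bool :=
  k * m5 == sgnb s.1.1 * m6 + sgnb s.1.2 * m7 + sgnb s.2 * m8.

Definition cond_ii (k : int) (m5 m6 m7 m8 : int) : Prop :=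
  forall s : bool * bool * bool, ~~ sign_rel k m5 m6 m7 m8 s.

From mathcomp Require Import all_boot all_order all_algebra.
From mathcomp Require Import zify ring.
Set Implicit Arguments. Unset Strict Implicit. Unset Printing Implicit Defensive.
Import Order.TTheory GRing.Theory Num.Theory.
Local Open Scope ring_scope.

(* A root x = z/2 of E_8 (z integral) pairs with l as <x, l> = (t . m)/2, where
   m = (m5, m6, m7, m8) and t = (z3 + z4 + z5, z6, z7, z8) is the key of x.
   The 10 roots of L2 have key 0.  The other integral roots have nonzero even
   keys, and t . m = 0 for one of them exactly when (i) fails.  A
   half-integral root has key +-(k, -s6, -s7, -s8) with k in {1, 3}, so
   t . m = 0 iff k m5 = s6 m6 + s7 m7 + s8 m8; each such key belongs to 6 roots
   if k = 1 and to 2 roots if k = 3.  Hence l is orthogonal to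
   10 + 2 I + 12 R_1 + 4 R_3 roots, where 2 I counts the integral roots outside
   L2 orthogonal to l and R_k the sign relations for k.  The multiset of keys is
   computed by enumerating the vectors with coordinates in {0, +-1/2, +-1},
   which include all roots. *)

Lemma count_enum_card (T : finType) (P : pred T) : count P (enum T) = #|P|.
Proof. by rewrite enumT cardE /enum_mem size_filter. Qed.

Fixpoint digit_seqs (n k : nat) : seq (seq nat) :=
  if n is n'.+1 then [seq d :: s | d <- iota 0 k, s <- digit_seqs n' k]
  else [:: [::]].

Lemma mem_digit_seqs n k s :
  (s \in digit_seqs n k) = (size s == n) && all (fun d => d < k)%N s.
Proof.
elim: n s => [|n IHn] [|d s] //=.
  by apply/negbTE/allpairsP => -[[d' s'] []].
rewrite eqSS; apply/allpairsP/and3P => [[[d' s'] [/= d'k s's [-> ->]]] | [sz dk sk]].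
  by move: d'k s's; rewrite mem_iota IHn => /andP[_ ->] /andP[].
by exists (d, s); rewrite mem_iota IHn sz sk.
Qed.

Lemma digit_seqs_uniq n k : uniq (digit_seqs n k).
Proof.
elim: n => //= n IHn; apply: allpairs_uniq => //; first exact: iota_uniq.
by move=> [d s] [d' s'] _ _ [-> ->].
Qed.

Section Digits.

Variables n k : nat.

Definition digits (y : {ffun 'I_n -> 'I_k}) : seq nat := [seq val (y i) | i <- enum 'I_n].

Lemma size_digits y : size (digits y) = n.
Proof. by rewrite size_map size_enum_ord. Qed.

Lemma nth_digits y (i : 'I_n) : nth 0%N (digits y) i = y i.
Proof. by rewrite (nth_map i) ?size_enum_ord // nth_ord_enum. Qed.

Lemma digits_inj : injective digits.
Proof.
by move=> y1 y2 eq_y; apply/ffunP => i; apply: val_inj; rewrite /= -!nth_digits eq_y.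
Qed.

End Digits.

Lemma perm_digit_seqs n k :
  perm_eq [seq digits y | y <- enum {ffun 'I_n -> 'I_k.+1}] (digit_seqs n k.+1).
Proof.
have uniq_digits : uniq [seq digits y | y <- enum {ffun 'I_n -> 'I_k.+1}].
  by rewrite (map_inj_uniq (@digits_inj _ _)) enum_uniq.
apply: uniq_perm uniq_digits (digit_seqs_uniq n k.+1) _ => s; rewrite mem_digit_seqs.
apply/mapP/andP => [[y _ ->] | [/eqP sz /(all_nthP 0%N) sk]].
  by rewrite size_digits all_map; split=> //; apply/allP => i _; exact: ltn_ord.
exists [ffun i : 'I_n => inord (nth 0%N s i) : 'I_k.+1]; first by rewrite mem_enum.
apply: (@eq_from_nth _ 0%N) => [|i]; rewrite ?size_digits ?sz // => lt_in.
by rewrite -[i]/(nat_of_ord (Ordinal lt_in)) nth_digits ffunE inordK // sk ?sz.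
Qed.

Lemma card_digits n k (P : pred (seq nat)) :
  #|[set y : {ffun 'I_n -> 'I_k.+1} | P (digits y)]| = count P (digit_seqs n k.+1).
Proof.
rewrite -(permP (perm_digit_seqs n k)) count_map count_enum_card.
by apply: eq_card => y; rewrite inE.
Qed.

Lemma Qint_dvdzE (m : int) (d : nat) :
  d != 0%N -> ((m%:~R / d%:R : rat) \is a Num.int) = (d %| m)%Z.
Proof.
move=> d_neq0; apply/idP/idP => [/intrP[q eq_q] | /(@Qint_dvdz m d) //].
apply/dvdzP; exists q; apply/eqP.
by rewrite -(eqr_int rat) intrM -eq_q /= divfK ?pnatr_eq0.
Qed.

Section SeqIndexing.

Variables (R : nmodType) (n : nat) (z : seq R).
Hypothesis size_z : size z = n.

Lemma sum_nth_ord (V : nmodType) (F : R -> V) :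
  \sum_(i < n) F z`_i = \sum_(a <- z) F a.
Proof. by rewrite (big_nth 0) size_z big_mkord. Qed.

Lemma forall_nth_ord (P : pred R) : [forall i : 'I_n, P z`_i] = all P z.
Proof.
apply/forallP/(all_nthP 0) => [Pz i | Pz i]; last by apply: Pz; rewrite size_z.
by rewrite size_z => lt_in; apply: (Pz (Ordinal lt_in)).
Qed.

End SeqIndexing.

Definition is_doubled_root (z : seq int) : bool :=
  [&& all (fun a => 2 %| a)%Z z || all (fun a => 2 %| a - 1)%Z z,
      (4 %| \sum_(a <- z) a)%Z & \sum_(a <- z) a ^+ 2 == 8].

Lemma is_E8_root_halfE (x : vec8) (z : seq int) :
  size z = 8%N -> (forall i, x i = (z`_i)%:~R / 2) -> is_E8_root x = is_doubled_root z.
Proof.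
move=> size_z xE; rewrite /is_E8_root /in_E8 /dot8 -andbA.
have half_int a : ((a%:~R / 2 : rat) \is a Num.int) = (2 %| a)%Z by apply: Qint_dvdzE.
congr [&& _ || _, _ & _].
- by rewrite -(forall_nth_ord size_z); apply: eq_forallb => i; rewrite xE half_int.
- rewrite -(forall_nth_ord size_z); apply: eq_forallb => i.
  by rewrite xE -half_int intrB; congr (_ \is a _); field.
- rewrite (eq_bigr (fun i : 'I_8 => (z`_i)%:~R / 2)) // -mulr_suml -rmorph_sum /=.
  by rewrite (sum_nth_ord size_z id) -mulrA -invfM -(Qint_dvdzE _ (_ : 4 != 0)%N).
- rewrite (eq_bigr (fun i : 'I_8 => (z`_i ^+ 2)%:~R / 4)); last first.
    by move=> i _; rewrite xE expr2 intrM; field.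
  rewrite -mulr_suml -rmorph_sum /= (sum_nth_ord size_z (fun a => a ^+ 2)).
  apply/eqP/eqP => [eq2 | ->]; last by field.
  by apply/eqP; rewrite -(eqr_int rat) -[_%:~R](divfK (_ : 4 != 0)) // eq2; apply/eqP.
Qed.

Definition key4 := (int * int * int * int)%type.

Definition root_key (z : seq int) : key4 := (z`_2 + z`_3 + z`_4, z`_5, z`_6, z`_7).

Definition key_orth (m5 m6 m7 m8 : int) (t : key4) : bool :=
  t.1.1.1 * m5 + t.1.1.2 * m6 + t.1.2 * m7 + t.2 * m8 == 0.

Lemma lvecE m5 m6 m7 m8 (i : 'I_8) :
  lvec m5 m6 m7 m8 i = ([:: 0; 0; m5; m5; m5; m6; m7; m8]`_i)%:~R.
Proof. by case: i => -[|[|[|[|[|[|[|[|]]]]]]]]. Qed.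

Lemma dot8_lvec_halfE (x : vec8) (z : seq int) m5 m6 m7 m8 :
  (forall i, x i = (z`_i)%:~R / 2) ->
  (dot8 x (lvec m5 m6 m7 m8) == 0) = key_orth m5 m6 m7 m8 (root_key z).
Proof.
move=> xE; rewrite /dot8 (eq_bigr (fun i : 'I_8 =>
  (z`_i * [:: 0; 0; m5; m5; m5; m6; m7; m8]`_i)%:~R / 2)); last first.
  by move=> i _; rewrite xE lvecE intrM mulrAC.
rewrite -mulr_suml -rmorph_sum mulf_eq0 invr_eq0 orbF intr_eq0 /key_orth /=.
by rewrite !big_ord_recl big_ord0 /=; congr (_ == 0); ring.
Qed.

Definition centered (s : seq nat) : seq int := [seq d%:Z - 2 | d <- s].

Lemma decode_centered y i : decode y i = ((centered (digits y))`_i)%:~R / 2.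
Proof. by rewrite (nth_map 0%N) ?size_digits // nth_digits. Qed.

Definition root_keys : seq key4 :=
  [seq root_key z | z <- map centered (digit_seqs 8 5) & is_doubled_root z].

Lemma num_orth_roots_keys m5 m6 m7 m8 :
  num_orth_roots (lvec m5 m6 m7 m8) = count (key_orth m5 m6 m7 m8) root_keys.
Proof.
rewrite count_map count_filter count_map -card_digits.
apply: eq_card => y; rewrite !inE /= andbC.
have size_c : size (centered (digits y)) = 8%N by rewrite size_map size_digits.
rewrite (is_E8_root_halfE size_c (decode_centered y)).
by rewrite (dot8_lvec_halfE _ _ _ _ (decode_centered y)).
Qed.

Definition sym_keys (s : seq key4) : seq key4 :=
  s ++ [seq (- t.1.1.1, - t.1.1.2, - t.1.2, - t.2) | t <- s].

Definition copies (T : Type) (n : nat) (s : seq T) : seq T := flatten (nseq n s).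

Lemma count_copies (T : Type) (a : pred T) n s : count a (copies n s) = (n * count a s)%N.
Proof. by rewrite count_flatten map_nseq sumn_nseq mulnC. Qed.

Lemma count_sym_keys m5 m6 m7 m8 s :
  count (key_orth m5 m6 m7 m8) (sym_keys s) = (count (key_orth m5 m6 m7 m8) s).*2.
Proof.
rewrite count_cat count_map -addnn; congr (_ + _)%N; apply: eq_count => t.
by rewrite /key_orth /= !mulNr -!opprD oppr_eq0.
Qed.

Definition sign_key (k : int) (s : bool * bool * bool) : key4 :=
  (k, - sgnb s.1.1, - sgnb s.1.2, - sgnb s.2).

Definition sign_triples : seq (bool * bool * bool) :=
  [:: (false, false, false); (false, false, true); (false, true, false); (false, true, true);
      (true, false, false); (true, false, true); (true, true, false); (true, true, true)].

Definition sign_keys (k : int) : seq key4 := map (sign_key k) sign_triples.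

Lemma count_sign_keys k m5 m6 m7 m8 :
  count (key_orth m5 m6 m7 m8) (sign_keys k) = #|[set s | sign_rel k m5 m6 m7 m8 s]|.
Proof.
have perm_triples : perm_eq sign_triples (enum {: bool * bool * bool}).
  apply: uniq_perm; rewrite ?enum_uniq // => -[[b6 b7] b8].
  by rewrite mem_enum; case: b6 b7 b8 => [] [] [].
rewrite count_map (permP perm_triples) count_enum_card; apply: eq_card => s.
by rewrite !inE /key_orth /sign_rel /sign_key /= -[RHS]subr_eq0; congr (_ == 0); ring.
Qed.

(* One key of each pair +-t, listed once per root having it: e.g. (2, 0, 0, 0) is the
   key of e_i + e_a and e_i - e_a for i in {3, 4, 5} and a in {1, 2}. *)
Definition integral_keys : seq key4 :=
     copies 3 [:: (4, 0, 0, 0)]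
  ++ copies 12 [:: (2, 0, 0, 0)]
  ++ copies 4 [:: (0, 2, 0, 0); (0, 0, 2, 0); (0, 0, 0, 2)]
  ++ copies 3 [:: (2, 2, 0, 0); (2, -2, 0, 0); (2, 0, 2, 0);
                  (2, 0, -2, 0); (2, 0, 0, 2); (2, 0, 0, -2)]
  ++ [:: (0, 2, 2, 0); (0, 2, -2, 0); (0, 2, 0, 2);
         (0, 2, 0, -2); (0, 0, 2, 2); (0, 0, 2, -2)].

Lemma perm_root_keys :
  perm_eq root_keys
    (nseq 10 (0, 0, 0, 0)
     ++ sym_keys (integral_keys ++ copies 6 (sign_keys 1) ++ copies 2 (sign_keys 3))).
Proof.
(* [unlock] opens the big operators of [is_doubled_root] to [vm_compute]. *)
by rewrite /root_keys /is_doubled_root unlock; vm_compute.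
Qed.

Lemma num_orth_roots_formula m5 m6 m7 m8 :
  num_orth_roots (lvec m5 m6 m7 m8) =
  (10 + (count (key_orth m5 m6 m7 m8) integral_keys
         + 6 * #|[set s | sign_rel 1 m5 m6 m7 m8 s]|
         + 2 * #|[set s | sign_rel 3 m5 m6 m7 m8 s]|).*2)%N.
Proof.
have orth0 : key_orth m5 m6 m7 m8 (0, 0, 0, 0) by rewrite /key_orth !mul0r !addr0.
rewrite num_orth_roots_keys (permP perm_root_keys) count_cat count_nseq orth0.
rewrite count_sym_keys count_cat (count_cat _ (copies _ _)) !count_copies.
by rewrite !count_sign_keys addnA.
Qed.

Lemma card_sign_rel_eq0 k m5 m6 m7 m8 :
  #|[set s | sign_rel k m5 m6 m7 m8 s]| = 0%N <-> cond_ii k m5 m6 m7 m8.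
Proof.
split=> [/card0_eq no_rel s | no_rel]; first by move: (no_rel s); rewrite !inE => ->.
by apply: eq_card0 => s; rewrite !inE (negbTE (no_rel s)).
Qed.

(* [lia] case-splits on every disequality in the context, so each goal is
   tried against one hypothesis at a time. *)
Ltac lia_from_one_hyp :=
  match goal with H : is_true (~~ (_ == _)) |- _ => clear - H; lia end.

Lemma count_integral_keys_eq0 m5 m6 m7 m8 :
  count (key_orth m5 m6 m7 m8) integral_keys = 0%N <-> cond_i m5 m6 m7 m8.
Proof.
have -> : count (key_orth m5 m6 m7 m8) integral_keys = 0%N <->
          all (predC (key_orth m5 m6 m7 m8)) integral_keys.
  by rewrite all_predC has_count -eqn0Ngt; split=> /eqP.
rewrite /integral_keys /copies /key_orth /cond_i /= -!andbA.
split=> H; repeat case/andP: H => ? H; repeat (apply/andP; split); lia_from_one_hyp.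
Qed.

Theorem proposition7p8 (m5 m6 m7 m8 : int) :
  (2 %| m5 + m6 + m7 + m8)%Z ->
  (num_orth_roots (lvec m5 m6 m7 m8) = 10%N <->
     cond_i m5 m6 m7 m8 /\ cond_ii 1 m5 m6 m7 m8 /\ cond_ii 3 m5 m6 m7 m8)
  /\
  (cond_i m5 m6 m7 m8 -> cond_ii 1 m5 m6 m7 m8 ->
   #|[set s : bool * bool * bool | sign_rel 3 m5 m6 m7 m8 s]| = 1%N ->
   num_orth_roots (lvec m5 m6 m7 m8) = 14%N).
Proof.
move=> _; rewrite num_orth_roots_formula.
split; last by move=> /count_integral_keys_eq0 -> /card_sign_rel_eq0 -> ->.
split=> [N10 | [/count_integral_keys_eq0 -> [/card_sign_rel_eq0 -> /card_sign_rel_eq0 ->]]] //.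
split; [|split]; [apply/count_integral_keys_eq0 | apply/card_sign_rel_eq0 ..]; lia.
Qed.
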